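(* Let $\mathcal{H}$ be a complex Hilbert space, let $A\in\mathcal{B}(\mathcal{H})$ be a nonzero positive operator, and let $\mathbb{A}=\begin{pmatrix}A&O\\O&A\end{pmatrix}$ on $\mathcal{H}\oplus\mathcal{H}$. Let $P,Q,R,S\in\mathcal{B}_A(\mathcal{H})$. Then $$\omega_{\mathbb{A}}\left[\begin{pmatrix}P&Q\\R&S\end{pmatrix}\right]\leq\min\{\mu,\nu\},$$ where $$\mu=\tfrac{\sqrt2}{2}\sqrt{\|P\|_A^2+\|Q\|_A^2+\sqrt{(\|P\|_A^2-\|Q\|_A^2)^2+4\|P^{\sharp_A}Q\|_A^2}}+\tfrac{\sqrt2}{2}\sqrt{\|R\|_A^2+\|S\|_A^2+\sqrt{(\|R\|_A^2-\|S\|_A^2)^2+4\|S^{\sharp_A}R\|_A^2}}$$ and $$\nu=\tfrac{\sqrt2}{2}\sqrt{\|P\|_A^2+\|R\|_A^2+\sqrt{(\|P\|_A^2-\|R\|_A^2)^2+4\|PR^{\sharp_A}\|_A^2}}+\tfrac{\sqrt2}{2}\sqrt{\|Q\|_A^2+\|S\|_A^2+\sqrt{(\|Q\|_A^2-\|S\|_A^2)^2+4\|SQ^{\sharp_A}\|_A^2}}.$$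
   Context: For a positive operator $A$ on $\mathcal{H}$, $\langle x,y\rangle_A:=\langle Ax,y\rangle$ and $\|x\|_A:=\sqrt{\langle x,x\rangle_A}$. $\mathcal{B}_A(\mathcal{H})$ is the set of $T\in\mathcal{B}(\mathcal{H})$ with $\mathcal{R}(T^*A)\subseteq\mathcal{R}(A)$; for such $T$, $T^{\sharp_A}$ is the unique solution $X$ of $AX=T^*A$ with $\mathcal{R}(X)\subseteq\overline{\mathcal{R}(A)}$. For $T$ bounded with respect to $\|\cdot\|_A$: $\|T\|_A:=\sup\{\|Tx\|_A:\|x\|_A=1\}$, $\omega_A(T):=\sup\{|\langle Tx,x\rangle_A|:\|x\|_A=1\}$. $\omega_{\mathbb{A}}$ is defined analogously on $\mathcal{H}\oplus\mathcal{H}$ with $\langle (x_1,x_2),(y_1,y_2)\rangle_{\mathbb{A}}=\langle x_1,y_1\rangle_A+\langle x_2,y_2\rangle_A$. *)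

From HB Require Import structures.
From mathcomp Require Import all_boot all_order all_algebra.
From mathcomp Require Import classical_sets reals.
From mathcomp.real_closed Require Import complex.
Set Implicit Arguments. Unset Strict Implicit. Unset Printing Implicit Defensive.
Import Order.TTheory GRing.Theory Num.Theory.
Local Open Scope ring_scope.
Local Open Scope classical_set_scope.

Section Hilbert.
Variables (R : realType) (V : lmodType R[i]) (ip : V -> V -> R[i]).

Definition hnorm (x : V) : R := Num.sqrt (complex.Re (ip x x)).

Definition is_hilbert : Prop :=
  [/\ (forall (a : R[i]) x y z, ip (a *: x + y) z = a * ip x z + ip y z),
      (forall x y, ip y x = conjc (ip x y)),
      (forall x, 0 <= ip x x),
      (forall x, ip x x = 0 -> x = 0) &
      (forall u : nat -> V,
         (forall e : R, 0 < e -> exists N, forall m n, (N <= m)%N -> (N <= n)%N ->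
              hnorm (u m - u n) < e) ->
         exists l, forall e : R, 0 < e -> exists N, forall n, (N <= n)%N ->
              hnorm (u n - l) < e)].

Definition is_bop (T : V -> V) : Prop :=
  (forall (a : R[i]) x y, T (a *: x + y) = a *: T x + T y) /\
  exists M : R, forall x, hnorm (T x) <= M * hnorm x.

Definition is_adjoint (T Ts : V -> V) : Prop :=
  forall x y, ip (T x) y = ip x (Ts y).

Definition is_positive (A : V -> V) : Prop :=
  is_bop A /\ forall x, 0 <= ip (A x) x.

Definition in_closure_range (A : V -> V) (z : V) : Prop :=
  forall e : R, 0 < e -> exists y, hnorm (z - A y) < e.

Definition in_BA (A T : V -> V) : Prop :=
  is_bop T /\ exists Ts, is_adjoint T Ts /\ forall x, exists y, Ts (A x) = A y.

(* X = T^{#_A}: the (unique) solution of A X = T^* A with R(X) in closure R(A) *)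
Definition is_sharp (A T X : V -> V) : Prop :=
  exists Ts, is_adjoint T Ts /\
    (forall x, A (X x) = Ts (A x)) /\ (forall x, in_closure_range A (X x)).
End Hilbert.

Section Seminorm.
Variables (R : realType) (W : Type) (ip : W -> W -> R[i]) (A : W -> W).

Definition anorm (x : W) : R := Num.sqrt (complex.Re (ip (A x) x)).

Definition opnormA (T : W -> W) : R :=
  sup [set r | exists x, anorm x = 1 /\ r = anorm (T x)].

Definition numradA (T : W -> W) : R :=
  sup [set r | exists x, anorm x = 1 /\ r = complex.Re `|ip (A (T x)) x|].
End Seminorm.

Definition ip2 (R : realType) (V : Type) (ip : V -> V -> R[i])
  (x y : V * V) : R[i] := ip x.1 y.1 + ip x.2 y.2.

Definition diag2 (V : Type) (A : V -> V) (x : V * V) : V * V := (A x.1, A x.2).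

Definition opmx2 (C : pzRingType) (V : lmodType C) (P Q R S : V -> V)
  (x : V * V) : V * V := (P x.1 + Q x.2, R x.1 + S x.2).

Definition bnd (R : realType) (a b c : R) : R :=
  Num.sqrt 2 / 2 * Num.sqrt (a ^+ 2 + b ^+ 2 + Num.sqrt ((a ^+ 2 - b ^+ 2) ^+ 2 + 4 * c ^+ 2)).

(* For an A-unit vector x = (x1, x2) put s = |x1|_A and t = |x2|_A, so s^2 + t^2 = 1.
   The quantity <T x, x>_A of the block operator is <P x1 + Q x2, x1>_A + <R x1 + S x2, x2>_A,
   hence it is at most |P x1 + Q x2|_A + |R x1 + S x2|_A; moving the entries to the
   other side with the A-adjoints, it is also the conjugate of
   <P# x1 + R# x2, x1>_A + <Q# x1 + S# x2, x2>_A. A row U x1 + W x2 satisfies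
   |U x1 + W x2|_A^2 <= |U|_A^2 s^2 + |W|_A^2 t^2 + 2 |U# W|_A s t, and the maximum of
   this quadratic form on the unit circle is the largest eigenvalue of
   [[|U|_A^2, |U# W|_A], [|U# W|_A, |W|_A^2]], which is the square of the bound.
   The analytic input is that the A-seminorms involved are finite: T# is bounded on H
   by the uniform boundedness principle, and iterating Cauchy-Schwarz along the powers of
   the A-selfadjoint operator T# T bounds |T x|_A^2 = <T# T x, x>_A by |T# T| |x|_A^2. *)

From Pilot Require Import Defs.
From HB Require Import structures.
From mathcomp Require Import all_boot all_order all_algebra.
From mathcomp Require Import classical_sets reals.
From mathcomp.real_closed Require Import complex.
From mathcomp Require Import ring lra.
From mathcomp Require Import boolp topology normedtype sequences.
Import Order.TTheory GRing.Theory Num.Theory.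
Set Implicit Arguments. Unset Strict Implicit. Unset Printing Implicit Defensive.
Local Open Scope ring_scope.

Section RealInequalities.
Variable R : realType.
Implicit Types a b c e k s t x y : R.

Lemma ler_of_sqr_le x y : 0 <= y -> x ^+ 2 <= y ^+ 2 -> x <= y.
Proof.
move=> y0 le_sqr; apply: le_trans (ler_norm x) _.
by rewrite -sqrtr_sqr -[y]ger0_norm // -sqrtr_sqr ler_sqrt ?sqr_ge0.
Qed.

Lemma sqr_le_mul_of_quadratic_ge0 a b c : 0 <= c ->
  (forall t, 0 <= a + 2 * t * b + t ^+ 2 * c) -> b ^+ 2 <= a * c.
Proof.
move=> c0 quad_ge0; have [c_eq0|c_neq0] := eqVneq c 0.
  subst c.
  have [->|b_neq0] := eqVneq b 0; first by rewrite expr0n mulr0.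
  have := quad_ge0 (- (a + 1) / (2 * b)).
  have -> : 2 * (- (a + 1) / (2 * b)) * b = - (a + 1) by field; rewrite b_neq0.
  rewrite mulr0; lra.
have c_gt0 : 0 < c by rewrite lt_def c_neq0.
have := quad_ge0 (- b / c).
have -> : a + 2 * (- b / c) * b + (- b / c) ^+ 2 * c = (a * c - b ^+ 2) / c.
  by field.
by rewrite pmulr_lge0 ?invr_gt0 // subr_ge0.
Qed.

Lemma le_of_le_addr_eps x y c : 0 <= c ->
  (forall e, 0 < e -> x <= y + c * e) -> x <= y.
Proof.
move=> c0 le_xy; apply/ler_addgt0Pr => e e0.
have c1_gt0 : 0 < c + 1 by rewrite ltr_wpDl.
apply: le_trans (le_xy _ (divr_gt0 e0 c1_gt0)) _; rewrite lerD2l.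
rewrite mulrA ler_pdivrMr // mulrC ler_pM2l //; lra.
Qed.

Lemma bernoulli_le t n : 1 <= t -> 1 + n%:R * (t - 1) <= t ^+ n.
Proof.
move=> t_ge1; elim: n => [|n IHn]; first by rewrite mul0r addr0 expr0.
rewrite exprS -natr1.
have : t * (1 + n%:R * (t - 1)) <= t * t ^+ n by rewrite ler_wpM2l // (le_trans ler01).
have := mulr_ge0 (ler0n R n) (sqr_ge0 (t - 1)); nra.
Qed.

Lemma exists_expr_gt t C : 1 < t -> exists n, C < t ^+ n.
Proof.
move=> t_gt1; have d_gt0 : 0 < t - 1 by rewrite subr_gt0.
exists (Num.truncn (`|C| / (t - 1))).+1.
apply: lt_le_trans (bernoulli_le _ (ltW t_gt1)).
have := truncnS_gt (`|C| / (t - 1)); rewrite ltr_pdivrMr //.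
have := ler_norm C; lra.
Qed.

Lemma invS_lt_eventually e : 0 < e -> exists N, forall n, (N <= n)%N -> n.+1%:R^-1 < e.
Proof.
move=> e0; exists (Num.truncn e^-1) => n le_Nn.
by rewrite invf_plt ?posrE ?ltr0n // (lt_le_trans (truncnS_gt _)) // ler_nat ltnS.
Qed.

(* Squaring the hypothesis along n gives a * f 0 ^+ 2 ^ n <= a ^+ 2 ^ n * f n,
   so (f 0 / (k * a)) ^+ 2 ^ n stays bounded. *)
Lemma iterated_sqr_le (f : nat -> R) a k C : 0 <= a -> 0 <= k ->
  (forall n, f n ^+ 2 <= a * f n.+1) -> (forall n, f n <= C * k ^+ (2 ^ n)) ->
  f 0%N <= k * a.
Proof.
move=> a0 k0 f_sqr f_bound.
have [f0_le0|f0_gt0] := lerP (f 0%N) 0; first exact: le_trans f0_le0 (mulr_ge0 _ _).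
rewrite leNgt; apply/negP => ka_lt_f0.
have f0_sqr_gt0 : 0 < f 0%N ^+ 2 by rewrite exprn_gt0.
have [a_eq0|a_neq0] := eqVneq a 0.
  by have := f_sqr 0%N; rewrite a_eq0 mul0r; lra.
have [k_eq0|k_neq0] := eqVneq k 0.
  have := le_trans (f_sqr 0%N) (ler_wpM2l a0 (f_bound 1%N)).
  rewrite k_eq0 expr0n /= !mulr0; lra.
have a_gt0 : 0 < a by rewrite lt_def a_neq0.
have ka_gt0 : 0 < k * a by rewrite mulr_gt0 // lt_def k_neq0.
have pow n : a * f 0%N ^+ (2 ^ n) <= a ^+ (2 ^ n) * f n.
  elim: n => [|n IHn]; first by rewrite expn0 !expr1.
  set F0 := f 0%N ^+ (2 ^ n).
  have lhs_ge0 : 0 <= a * F0 by rewrite mulr_ge0 // exprn_ge0 // ltW.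
  have sqr_le : (a * F0) ^+ 2 <= (a ^+ (2 ^ n) * f n) ^+ 2.
    by rewrite ler_sqr ?nnegrE // (le_trans lhs_ge0 IHn).
  rewrite !exprMn in sqr_le.
  have := le_trans sqr_le (ler_wpM2l (exprn_ge0 2 (exprn_ge0 (2 ^ n) a0)) (f_sqr n)).
  rewrite expnS mul2n -addnn !exprD -/F0 => le_next.
  rewrite -(ler_pM2l a_gt0); nra.
set t := f 0%N / (k * a).
have t_gt1 : 1 < t by rewrite ltr_pdivlMr // mul1r.
have [m C_lt] := exists_expr_gt (C / a) t_gt1.
have tm_le : t ^+ m <= t ^+ (2 ^ m) by rewrite ler_eXn2l // ltnW // ltn_expl.
have f0E : f 0%N = t * (k * a) by rewrite /t divfK // gt_eqF.
clearbody t.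
have := le_trans (pow m) (ler_wpM2l (exprn_ge0 (2 ^ m) a0) (f_bound m)).
rewrite f0E !exprMn; set N := (2 ^ m)%N => pow_le.
have kaN_gt0 : 0 < k ^+ N * a ^+ N by rewrite mulr_gt0 ?exprn_gt0 // lt_def k_neq0.
have tN_le : a * t ^+ N <= C by rewrite -(ler_pM2r kaN_gt0); nra.
have := lt_le_trans C_lt tm_le; rewrite ltr_pdivrMr //; lra.
Qed.

Lemma bnd_ge0 a b c : 0 <= bnd a b c.
Proof. by rewrite /bnd mulr_ge0 ?divr_ge0 ?sqrtr_ge0. Qed.

Lemma bndC a b c : bnd a b c = bnd b a c.
Proof. by rewrite /bnd [b ^+ 2 + _]addrC -[(b ^+ 2 - _) ^+ 2]sqrrN opprB. Qed.

Lemma bnd_sqr a b c : bnd a b c ^+ 2 =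
  (a ^+ 2 + b ^+ 2 + Num.sqrt ((a ^+ 2 - b ^+ 2) ^+ 2 + 4 * c ^+ 2)) / 2.
Proof.
rewrite /bnd exprMn expr_div_n !sqr_sqrtr ?addr_ge0 ?sqrtr_ge0 ?sqr_ge0 //.
by field.
Qed.

(* bnd a b c ^+ 2 is the largest eigenvalue of the matrix [[a^2, c], [c, b^2]],
   hence the maximum of its quadratic form on the unit circle. *)
Lemma le_bnd a b c s t x : 0 <= s -> 0 <= t -> s ^+ 2 + t ^+ 2 = 1 ->
  x ^+ 2 <= a ^+ 2 * s ^+ 2 + b ^+ 2 * t ^+ 2 + 2 * c * s * t -> x <= bnd a b c.
Proof.
move=> s0 t0 st1 x_sqr; apply: ler_of_sqr_le (bnd_ge0 _ _ _) _; rewrite bnd_sqr.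
set D := Num.sqrt _.
have D_sqr : D ^+ 2 = (a ^+ 2 - b ^+ 2) ^+ 2 + 4 * c ^+ 2.
  by rewrite /D sqr_sqrtr // addr_ge0 ?sqr_ge0 // mulr_ge0 ?ler0n ?sqr_ge0.
have D_ge : `|a ^+ 2 - b ^+ 2| <= D.
  apply: ler_of_sqr_le (sqrtr_ge0 _) _.
  by rewrite real_normK ?num_real // D_sqr lerDl mulr_ge0 ?ler0n ?sqr_ge0.
move: D_ge; rewrite ler_norml => /andP[D_ge1 D_ge2].
set u := (b ^+ 2 - a ^+ 2 + D) / 2; set v := (a ^+ 2 - b ^+ 2 + D) / 2.
have uv : u * v = c ^+ 2 by rewrite /u /v; lra.
have cross : 2 * c * s * t <= u * s ^+ 2 + v * t ^+ 2.
  have u0 : 0 <= u by rewrite /u; lra.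
  have v0 : 0 <= v by rewrite /v; lra.
  apply: ler_of_sqr_le; first by apply: addr_ge0; apply: mulr_ge0; rewrite ?sqr_ge0.
  have := sqr_ge0 (u * s ^+ 2 - v * t ^+ 2).
  rewrite !exprMn -uv; lra.
have -> : (a ^+ 2 + b ^+ 2 + D) / 2 = (a ^+ 2 + b ^+ 2 + D) / 2 * (s ^+ 2 + t ^+ 2).
  by rewrite st1 mulr1.
move: cross; rewrite /u /v; lra.
Qed.
End RealInequalities.

(* Plain [Re] would be the real part of a numClosedFieldType. *)
Local Notation Re := complex.Re.
Local Notation Im := complex.Im.

Section ComplexParts.
Variable R : realType.
Implicit Types x y : R[i].

Lemma ReM x y : Re (x * y) = Re x * Re y - Im x * Im y.
Proof. by case: x y => [a b] [c d]. Qed.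

Lemma ReJ x : Re x^*%C = Re x. Proof. by case: x. Qed.

Lemma ImJ x : Im x^*%C = - Im x. Proof. by case: x. Qed.

Lemma Re_real_mul (r : R) x : Re (r%:C%C * x) = r * Re x.
Proof. by case: x => a b /=; rewrite mul0r subr0. Qed.

Lemma Re_normc_ge0 x : 0 <= Re `|x|.
Proof. by have := normr_ge0 x; rewrite lecE => /andP[]. Qed.

Lemma Re_normc_real (r : R) : Re `|r%:C%C| = `|r|.
Proof. by rewrite normc_def /= expr0n addr0 sqrtr_sqr. Qed.

Lemma Re_normcJ x : Re `|x^*%C| = Re `|x|.
Proof. by rewrite normcJ. Qed.

Lemma Re_normc_sqr x : Re `|x| ^+ 2 = Re x ^+ 2 + Im x ^+ 2.
Proof. by rewrite normc_def /= sqr_sqrtr // addr_ge0 ?sqr_ge0. Qed.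

Lemma norm_Re_le x : `|Re x| <= Re `|x|.
Proof. by have := normc_ge_Re x; rewrite lecE => /andP[]. Qed.

Lemma Re_normcD x y : Re `|x + y| <= Re `|x| + Re `|y|.
Proof. by have := ler_normD x y; rewrite lecE raddfD => /andP[]. Qed.
End ComplexParts.

Section HermitianForm.
Variables (R : realType) (V : lmodType R[i]) (form : V -> V -> R[i]).
Hypothesis formDZl : forall a x y z, form (a *: x + y) z = a * form x z + form y z.
Hypothesis formC : forall x y, form y x = (form x y)^*%C.
Hypothesis form_ge0 : forall x, 0 <= form x x.

Lemma form0l z : form 0 z = 0.
Proof.
have := formDZl 1 0 0 z; rewrite scale1r addr0 mul1r => double.
by apply: (addrI (form 0 z)); rewrite addr0 -double.
Qed.

Lemma formDl x y z : form (x + y) z = form x z + form y z.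
Proof. by rewrite -[x]scale1r formDZl mul1r scale1r. Qed.

Lemma formZl a x z : form (a *: x) z = a * form x z.
Proof. by rewrite -[a *: x]addr0 formDZl form0l addr0. Qed.

Lemma formNl x z : form (- x) z = - form x z.
Proof. by rewrite -scaleN1r formZl mulN1r. Qed.

Lemma formBl x y z : form (x - y) z = form x z - form y z.
Proof. by rewrite formDl formNl. Qed.

Lemma formDr x y z : form z (x + y) = form z x + form z y.
Proof. by rewrite formC formDl rmorphD /= -!formC. Qed.

Lemma formZr a x z : form z (a *: x) = a^*%C * form z x.
Proof. by rewrite formC formZl rmorphM /= -formC. Qed.

Lemma formBr x y z : form z (x - y) = form z x - form z y.
Proof. by rewrite formC formBl rmorphB /= -!formC. Qed.

Lemma Re_formC x y : Re (form y x) = Re (form x y).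
Proof. by rewrite formC ReJ. Qed.

Lemma Im_form_diag x : Im (form x x) = 0.
Proof. exact: ger0_Im. Qed.

Definition fnorm x : R := Num.sqrt (Re (form x x)).

Lemma Re_form_diag_ge0 x : 0 <= Re (form x x).
Proof. by have := form_ge0 x; rewrite lecE => /andP[]. Qed.

Lemma fnorm_ge0 x : 0 <= fnorm x. Proof. exact: sqrtr_ge0. Qed.

Lemma fnorm_sqr x : fnorm x ^+ 2 = Re (form x x).
Proof. exact/sqr_sqrtr/Re_form_diag_ge0. Qed.

Lemma fnormD_sqr x y :
  fnorm (x + y) ^+ 2 = fnorm x ^+ 2 + fnorm y ^+ 2 + 2 * Re (form x y).
Proof. by rewrite !fnorm_sqr formDl !formDr !raddfD /= (Re_formC x y); ring. Qed.

Lemma fnormZ a x : fnorm (a *: x) = Re `|a| * fnorm x.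
Proof.
rewrite /fnorm formZl formZr mulrA.
have -> : Re (a * a^*%C * form x x) = Re `|a| ^+ 2 * Re (form x x).
  by rewrite ReM Im_form_diag mulr0 subr0 Re_normc_sqr ReM ReJ ImJ mulrN opprK.
by rewrite sqrtrM ?sqr_ge0 // sqrtr_sqr ger0_norm ?Re_normc_ge0.
Qed.

Lemma fnormZr (r : R) x : fnorm (r%:C%C *: x) = `|r| * fnorm x.
Proof. by rewrite fnormZ Re_normc_real. Qed.

Lemma fnormN x : fnorm (- x) = fnorm x.
Proof. by rewrite -scaleN1r fnormZ normrN1 /= mul1r. Qed.

Lemma Re_form_le x y : Re (form x y) <= fnorm x * fnorm y.
Proof.
set b := Re (form x y).
have quad_ge0 t : 0 <= fnorm x ^+ 2 + 2 * t * b + t ^+ 2 * fnorm y ^+ 2.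
  have := Re_form_diag_ge0 (x + t%:C%C *: y); rewrite -fnorm_sqr fnormD_sqr fnormZr.
  by rewrite formZr conjc_real Re_real_mul exprMn real_normK ?num_real //; lra.
have := sqr_le_mul_of_quadratic_ge0 (sqr_ge0 (fnorm y)) quad_ge0.
rewrite -exprMn => /ler_of_sqr_le; apply; exact: mulr_ge0 (fnorm_ge0 x) (fnorm_ge0 y).
Qed.

Lemma normc_form_le x y : Re `|form x y| <= fnorm x * fnorm y.
Proof.
set z := form x y; have [z_eq0|z_neq0] := eqVneq (Re `|z|) 0.
  by rewrite z_eq0 mulr_ge0 ?fnorm_ge0.
have z_gt0 : 0 < Re `|z| by rewrite lt_def z_neq0 Re_normc_ge0.
have := Re_form_le (z^*%C *: x) y; rewrite formZl fnormZ Re_normcJ -mulrA.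
rewrite ReM ReJ ImJ mulNr opprK -!expr2 -Re_normc_sqr expr2 ler_pM2l //.
Qed.

Lemma fnormD x y : fnorm (x + y) <= fnorm x + fnorm y.
Proof.
apply: ler_of_sqr_le; first by rewrite addr_ge0 ?fnorm_ge0.
by rewrite fnormD_sqr sqrrD; have := Re_form_le x y; lra.
Qed.
End HermitianForm.

(* Polarization: the diagonal is real at y + x and at 'i y + x. *)
Lemma hermitian_of_real_diag (R : realType) (V : lmodType R[i]) (form : V -> V -> R[i]) :
  (forall a x y z, form (a *: x + y) z = a * form x z + form y z) ->
  (forall a x y z, form z (a *: x + y) = a^*%C * form z x + form z y) ->
  (forall x, Im (form x x) = 0) ->
  forall x y, form y x = (form x y)^*%C.
Proof.
move=> formDZl formDZr Im_diag x y.
have expand a : form (a *: y + x) (a *: y + x) =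
    a * (a^*%C * form y y + form y x) + (a^*%C * form x y + form x x).
  by rewrite formDZl !formDZr.
have := Im_diag x; have := Im_diag y.
have := Im_diag (1 *: y + x); have := Im_diag ('i%C *: y + x); rewrite !expand.
move: (form x y) (form y x) (form x x) (form y y) => [a b] [c d] [e f] [g h] /=.
by move=> *; apply/eqP; rewrite eq_complex /=; apply/andP; split; apply/eqP; lra.
Qed.

Section LinearMaps.
Variables (R : realType) (V : lmodType R[i]) (T : V -> V).
Hypothesis T_lin : forall a x y, T (a *: x + y) = a *: T x + T y.

Lemma lin0 : T 0 = 0.
Proof.
have := T_lin 1 0 0; rewrite !scale1r addr0 => double.
by apply: (addrI (T 0)); rewrite addr0 -double.
Qed.

Lemma linD x y : T (x + y) = T x + T y.
Proof. by rewrite -[x]scale1r T_lin !scale1r. Qed.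

Lemma linZ : scalable T.
Proof. by move=> a x; rewrite -[a *: x]addr0 T_lin lin0 addr0. Qed.

Lemma linB x y : T (x - y) = T x - T y.
Proof. by rewrite linD -scaleN1r linZ scaleN1r. Qed.
End LinearMaps.

Section Hilbert.
Variables (R : realType) (V : lmodType R[i]) (ip : V -> V -> R[i]).
Hypothesis hH : is_hilbert ip.
Local Notation hnorm := (hnorm ip).

Lemma ipDZl a x y z : ip (a *: x + y) z = a * ip x z + ip y z.
Proof. by case: hH. Qed.

Lemma ipC x y : ip y x = (ip x y)^*%C.
Proof. by case: hH. Qed.

Lemma ip_ge0 x : 0 <= ip x x.
Proof. by case: hH. Qed.

Lemma hnorm_ge0 x : 0 <= hnorm x. Proof. exact: sqrtr_ge0. Qed.

Lemma hnorm0 : hnorm 0 = 0.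
Proof. by rewrite /hnorm (form0l ipDZl) sqrtr0. Qed.

Lemma hnorm_sqr x : hnorm x ^+ 2 = Re (ip x x).
Proof. exact: (fnorm_sqr ip_ge0). Qed.

Lemma hnormD x y : hnorm (x + y) <= hnorm x + hnorm y.
Proof. exact: (fnormD ipDZl ipC ip_ge0). Qed.

Lemma hnormZ a x : hnorm (a *: x) = Re `|a| * hnorm x.
Proof. exact: (fnormZ ipDZl ipC ip_ge0). Qed.

Lemma hnormN x : hnorm (- x) = hnorm x.
Proof. exact: (fnormN ipDZl ipC ip_ge0). Qed.

Lemma Re_ip_le x y : Re (ip x y) <= hnorm x * hnorm y.
Proof. exact: (Re_form_le ipDZl ipC ip_ge0). Qed.

Lemma normc_ip_le x y : Re `|ip x y| <= hnorm x * hnorm y.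
Proof. exact: (normc_form_le ipDZl ipC ip_ge0). Qed.

Lemma Re_ip_real_scale (r s : R) x y :
  Re (ip (r%:C%C *: x) (s%:C%C *: y)) = r * s * Re (ip x y).
Proof.
by rewrite (formZl ipDZl) (formZr ipDZl ipC) conjc_real mulrA -rmorphM Re_real_mul mulrC.
Qed.

Lemma hnorm_eq0 x : hnorm x = 0 -> x = 0.
Proof.
move=> x0; case: hH => _ _ _ ip_def _; apply: ip_def.
apply/eqP; rewrite eq_complex (Im_form_diag ip_ge0) eqxx andbT.
by rewrite -hnorm_sqr x0 expr0n.
Qed.

Lemma ip_inj_r p q : (forall u, ip u p = ip u q) -> p = q.
Proof.
move=> eq_ip; apply/eqP; rewrite -subr_eq0; apply/eqP/hnorm_eq0.
by rewrite /hnorm (formBr ipDZl ipC) eq_ip subrr /= sqrtr0.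
Qed.

(* V as a real normed space, the setting of Banach_Steinhauss. *)
Definition realV : Type := V.
HB.instance Definition _ := GRing.Zmodule.on realV.

Definition real_scale (r : R) (x : realV) : realV := r%:C%C *: (x : V).

Lemma real_scaleA r s x : real_scale r (real_scale s x) = real_scale (r * s) x.
Proof. by rewrite /real_scale scalerA -rmorphM. Qed.

Lemma real_scale1 : left_id 1 real_scale.
Proof. by move=> x; rewrite /real_scale rmorph1 scale1r. Qed.

Lemma real_scaleDr : right_distributive real_scale +%R.
Proof. by move=> r x y; rewrite /real_scale scalerDr. Qed.

Lemma real_scaleDl x : {morph real_scale^~ x : r s / r + s}.
Proof. by move=> r s; rewrite /real_scale rmorphD scalerDl. Qed.

HB.instance Definition _ := GRing.Zmodule_isLmodule.Build R realV
  real_scaleA real_scale1 real_scaleDr real_scaleDl.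

Lemma hnormZ_real (r : R) (x : realV) : hnorm (r *: x) = `|r| * hnorm x.
Proof. by rewrite [hnorm _]hnormZ Re_normc_real. Qed.

HB.instance Definition _ := Lmodule_isNormed.Build R realV hnormD hnormZ_real hnorm_eq0.

Lemma ball_realV (x : realV) e y : ball x e y <-> hnorm (x - y) < e.
Proof. by rewrite -ball_normE. Qed.

Lemma realV_complete (F : set_system realV) : ProperFilter F -> cauchy F -> cvg F.
Proof.
move=> FF /cauchyP F_cauchy.
have /choice [c c_ball] : forall n, exists x : realV, F (ball x n.+1%:R^-1).
  by move=> n; apply: F_cauchy; rewrite invr_gt0 ltr0n.
have c_close m n : hnorm (c m - c n) < m.+1%:R^-1 + n.+1%:R^-1.
  have [z [/ball_realV zm /ball_realV zn]] := filter_ex (filterI (c_ball m) (c_ball n)).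
  have -> : c m - c n = (c m - z) + - (c n - z) by rewrite opprB addrA subrK.
  by apply: le_lt_trans (hnormD _ _) _; rewrite hnormN ltrD.
have [l c_to_l] : exists l, forall e, 0 < e ->
    exists N, forall n, (N <= n)%N -> hnorm (c n - l) < e.
  case: hH => _ _ _ _; apply => e e0.
  have [N N_small] := invS_lt_eventually (divr_gt0 e0 (ltr0n _ 2)).
  exists N => m n Nm Nn; apply: lt_le_trans (c_close m n) _.
  by rewrite [e]splitr lerD // ltW // N_small.
apply/cvg_ex; exists l => B /nbhs_ballP [e /= e0 le_B].
have [N1 N1_small] := invS_lt_eventually (divr_gt0 e0 (ltr0n _ 2)).
have [N2 N2_close] := c_to_l _ (divr_gt0 e0 (ltr0n _ 2)).
apply: filterS (c_ball (maxn N1 N2)) => y /ball_realV c_y; apply/le_B/ball_realV.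
have -> : l - y = - (c (maxn N1 N2) - l) + (c (maxn N1 N2) - y).
  by rewrite opprB addrA subrK.
apply: le_lt_trans (hnormD _ _) _.
rewrite hnormN [e]splitr ltrD ?N2_close ?leq_maxr //.
by apply: lt_trans c_y _; rewrite N1_small ?leq_maxl.
Qed.

HB.instance Definition _ := Uniform_isComplete.Build realV realV_complete.

Lemma uniform_bound_Re_ip (G : set V) :
  (forall y, exists M, forall w, G w -> `|Re (ip y w)| <= M) ->
  exists M, forall w, G w -> forall y, hnorm y <= 1 -> `|Re (ip y w)| <= M.
Proof.
move=> ptw_bound.
pose F : set (realV -> R^o) := [set (fun y => Re (ip y w)) | w in G]%classic.
have F_lin_bounded f : F f -> bounded_fun_norm f /\ linear f.
  move=> [w Gw <-]; split.
    move=> r; exists (`|r| * hnorm w) => x x_le.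
    apply: le_trans (norm_Re_le _) _; apply: le_trans (normc_ip_le _ _) _.
    by rewrite ler_wpM2r ?hnorm_ge0 // (le_trans x_le) ?ler_norm.
  by move=> a u v; rewrite /GRing.scale /= ipDZl raddfD /= Re_real_mul.
have F_ptw : pointwise_bounded F.
  by move=> y; have [M M_bound] := ptw_bound y; exists M => _ [w Gw <-]; exact: M_bound.
have [M M_bound] := Banach_Steinhauss F_lin_bounded F_ptw 1.
by exists M => w Gw y y_le1; apply: (M_bound (fun y : realV => Re (ip y w))); first exists w.
Qed.

Section PositiveOperator.
Variable A : V -> V.
Hypothesis hA : is_positive ip A.
Local Notation anorm := (anorm ip A).
Local Notation ipA := (fun x y => ip (A x) y).

Lemma A_lin a x y : A (a *: x + y) = a *: A x + A y.
Proof. by case: hA => -[]. Qed.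

Lemma ipA_DZl a x y z : ip (A (a *: x + y)) z = a * ip (A x) z + ip (A y) z.
Proof. by rewrite A_lin ipDZl. Qed.

Lemma ipA_ge0 x : 0 <= ip (A x) x.
Proof. by case: hA. Qed.

Lemma ipA_C x y : ip (A y) x = (ip (A x) y)^*%C.
Proof.
apply: (hermitian_of_real_diag (form := ipA)) => [a u v w|a u v w|u].
- exact: ipA_DZl.
- by rewrite /= (formDr ipDZl ipC) (formZr ipDZl ipC).
- exact/ger0_Im/ipA_ge0.
Qed.

Lemma A_selfadjoint x y : ip (A x) y = ip x (A y).
Proof. by rewrite [RHS]ipC; exact: ipA_C. Qed.

Lemma anorm_ge0 x : 0 <= anorm x. Proof. exact: sqrtr_ge0. Qed.

Lemma anorm_sqr x : anorm x ^+ 2 = Re (ip (A x) x).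
Proof. exact: (fnorm_sqr (form := ipA) ipA_ge0). Qed.

Lemma anormD_sqr x y :
  anorm (x + y) ^+ 2 = anorm x ^+ 2 + anorm y ^+ 2 + 2 * Re (ip (A x) y).
Proof. exact: (fnormD_sqr (form := ipA) ipA_DZl ipA_C ipA_ge0). Qed.

Lemma anormZ a x : anorm (a *: x) = Re `|a| * anorm x.
Proof. exact: (fnormZ (form := ipA) ipA_DZl ipA_C ipA_ge0). Qed.

Lemma Re_ipA_le x y : Re (ip (A x) y) <= anorm x * anorm y.
Proof. exact: (Re_form_le (form := ipA) ipA_DZl ipA_C ipA_ge0). Qed.

Lemma normc_ipA_le x y : Re `|ip (A x) y| <= anorm x * anorm y.
Proof. exact: (normc_form_le (form := ipA) ipA_DZl ipA_C ipA_ge0). Qed.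

Lemma closure_rangeB z1 z2 : in_closure_range ip A z1 -> in_closure_range ip A z2 ->
  in_closure_range ip A (z1 - z2).
Proof.
move=> z1_cl z2_cl e e0; have e2_gt0 : 0 < e / 2 by rewrite divr_gt0.
have [y1 y1_close] := z1_cl _ e2_gt0; have [y2 y2_close] := z2_cl _ e2_gt0.
exists (y1 - y2); rewrite (linB A_lin).
have -> : z1 - z2 - (A y1 - A y2) = (z1 - A y1) + - (z2 - A y2).
  by rewrite !opprB addrACA [RHS]addrACA [- A y1 + _]addrC.
by apply: le_lt_trans (hnormD _ _) _; rewrite hnormN [e]splitr ltrD.
Qed.

Lemma closure_rangeZ a z : in_closure_range ip A z -> in_closure_range ip A (a *: z).
Proof.
move=> z_cl e e0; have a1_gt0 : 0 < Re `|a| + 1 by rewrite ltr_wpDl ?Re_normc_ge0.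
have [y y_close] := z_cl _ (divr_gt0 e0 a1_gt0).
exists (a *: y); rewrite (linZ A_lin) -scalerBr hnormZ.
apply: (@le_lt_trans _ _ ((Re `|a| + 1) * hnorm (z - A y))).
  by rewrite ler_wpM2r ?hnorm_ge0 // lerDl.
by rewrite -ltr_pdivlMl // mulrC.
Qed.

Lemma hnorm_le_of_closure_range z c : in_closure_range ip A z -> 0 <= c ->
  (forall u, Re (ip z (A u)) <= c * hnorm (A u)) -> hnorm z <= c.
Proof.
move=> z_cl c0 z_bound.
suff sqr_le : hnorm z ^+ 2 <= c * hnorm z.
  have [->|z_neq0] := eqVneq (hnorm z) 0; first by [].
  by move: sqr_le; rewrite expr2 ler_pM2r // lt_def z_neq0 hnorm_ge0.
apply: (le_of_le_addr_eps (addr_ge0 c0 (hnorm_ge0 z))) => e e0.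
have [u u_close] := z_cl _ e0.
have Au_le : hnorm (A u) <= hnorm z + e.
  have -> : A u = z + - (z - A u) by rewrite opprB addrC subrK.
  by apply: le_trans (hnormD _ _) _; rewrite hnormN lerD2l ltW.
have := Re_ip_le z (z - A u); rewrite (formBr ipDZl ipC) raddfB /= -hnorm_sqr.
have := z_bound u; have := ler_wpM2l c0 Au_le.
have := ler_wpM2l (hnorm_ge0 z) (ltW u_close); nra.
Qed.

Lemma closure_range_ker z : in_closure_range ip A z -> A z = 0 -> z = 0.
Proof.
move=> z_cl Az0; apply/hnorm_eq0/eqP; rewrite eq_le hnorm_ge0 andbT.
apply: hnorm_le_of_closure_range => // u.
by rewrite -A_selfadjoint Az0 (form0l ipDZl) mul0r.
Qed.

Lemma adjoint_scalable T Ts : is_adjoint ip T Ts -> scalable Ts.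
Proof.
by move=> adj a y; apply: ip_inj_r => u; rewrite -adj !(formZr ipDZl ipC) -adj.
Qed.

(* Iterating Cauchy-Schwarz along K, K^2, K^4, ... turns the Hilbert-norm bound
   on K into the same bound for the A-quadratic form of K. *)
Lemma Re_ipA_le_of_symmetric (K : V -> V) (k : R) : 0 <= k ->
  (forall x y, ip (A (K x)) y = ip x (A (K y))) ->
  (forall x, hnorm (K x) <= k * hnorm x) ->
  forall x, Re (ip (A (K x)) x) <= k * anorm x ^+ 2.
Proof.
move=> k0 K_sym K_bound x.
have [MA MA_bound] : exists MA, forall y, hnorm (A y) <= MA * hnorm y by case: hA => -[].
have iter_sym n u v : ip (A (iter n K u)) v = ip u (A (iter n K v)).
  elim: n u v => [|n IHn] u v /=; first exact: A_selfadjoint.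
  by rewrite K_sym -A_selfadjoint IHn -iterSr.
have iter_bound n u : hnorm (iter n K u) <= k ^+ n * hnorm u.
  elim: n => [|n IHn] /=; first by rewrite expr0 mul1r.
  by apply: le_trans (K_bound _) _; rewrite exprS -mulrA ler_wpM2l.
pose f n := Re (ip (A (iter (2 ^ n) K x)) x).
apply: (@iterated_sqr_le _ f _ _ (`|MA| * hnorm x ^+ 2)) => // [|n|n].
- exact: sqr_ge0.
- set u := iter (2 ^ n) K x.
  have u_sqr : anorm u ^+ 2 = f n.+1.
    rewrite anorm_sqr iter_sym -A_selfadjoint (Re_formC ipA_C) /f -iterD.
    by rewrite expnS mul2n -addnn.
  have f_le : `|f n| <= anorm u * anorm x by apply: le_trans (norm_Re_le _) (normc_ipA_le _ _).
  rewrite -real_normK ?num_real // -u_sqr [_ * anorm u ^+ 2]mulrC -exprMn.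
  by rewrite ler_sqr ?nnegrE ?normr_ge0 ?mulr_ge0 ?anorm_ge0.
- apply: le_trans (ler_norm _) _; apply: le_trans (norm_Re_le _) _.
  apply: le_trans (normc_ip_le _ _) _.
  have A_le := le_trans (MA_bound _) (ler_wpM2r (hnorm_ge0 _) (ler_norm MA)).
  have := le_trans (A_le _) (ler_wpM2l (normr_ge0 MA) (iter_bound (2 ^ n)%N x)).
  move=> /(ler_wpM2r (hnorm_ge0 x)); nra.
Qed.

Section Sharp.
Variables T X : V -> V.
Hypothesis T_bop : is_bop ip T.
Hypothesis X_sharp : is_sharp ip A T X.

Lemma sharp_cross u w : ip (A (T u)) w = ip (A u) (X w).
Proof.
case: X_sharp => Ts [adj [AX _]].
by rewrite A_selfadjoint adj -AX -A_selfadjoint.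
Qed.

Lemma sharp_cross_conj u w : ip (A (T u)) w = (ip (A (X w)) u)^*%C.
Proof. by rewrite sharp_cross ipA_C. Qed.

Lemma sharp_scalable : scalable X.
Proof.
case: X_sharp => Ts [adj [AX X_cl]] a x.
apply/eqP; rewrite -subr_eq0; apply/eqP/closure_range_ker.
  by apply: closure_rangeB => //; apply: closure_rangeZ.
by rewrite (linB A_lin) (linZ A_lin) !AX (linZ A_lin) (adjoint_scalable adj) subrr.
Qed.

Lemma ipA_sharp_comp x y : ip (A (X (T x))) y = ip (A (T x)) (T y).
Proof. by rewrite ipA_C -sharp_cross -ipA_C. Qed.

(* X is bounded: by the uniform boundedness principle applied to the functionals
   y |-> Re <y, A (T u)> = Re <A u, X y>. *)
Lemma sharp_weak_bound : exists M, 0 <= M /\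
  forall y u, Re (ip (A u) (X y)) <= M * hnorm y * hnorm (A u).
Proof.
have Re_cross y u : Re (ip y (A (T u))) = Re (ip (A u) (X y)).
  by rewrite (Re_formC ipC) sharp_cross.
pose G : set V := [set A (T u) | u in [set u | hnorm (A u) <= 1]]%classic.
have ptw_bound y : exists M, forall w, G w -> `|Re (ip y w)| <= M.
  exists (hnorm (X y)) => _ [u Au_le1 <-]; rewrite Re_cross.
  apply: le_trans (norm_Re_le _) (le_trans (normc_ip_le _ _) _).
  by rewrite ler_piMl ?hnorm_ge0.
have [M M_bound] := uniform_bound_Re_ip ptw_bound.
have unit_scale z : hnorm z != 0 -> hnorm ((hnorm z)^-1%:C%C *: z) = 1.
  by move=> z_neq0; rewrite hnormZ Re_normc_real ger0_norm ?invr_ge0 ?hnorm_ge0 ?mulVf.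
exists M; split.
  apply: le_trans (normr_ge0 _) (M_bound (A (T 0)) _ 0 _); last by rewrite hnorm0.
  by exists 0; rewrite //= (lin0 A_lin) hnorm0.
move=> y u; have [Au0|Au_neq0] := eqVneq (hnorm (A u)) 0.
  by rewrite (hnorm_eq0 Au0) (form0l ipDZl) hnorm0 mulr0.
rewrite -Re_cross; have [y0|y_neq0] := eqVneq (hnorm y) 0.
  by rewrite (hnorm_eq0 y0) (form0l ipDZl) hnorm0 mulr0 mul0r.
set u1 := (hnorm (A u))^-1%:C%C *: u; set y1 := (hnorm y)^-1%:C%C *: y.
have Gu1 : G (A (T u1)) by exists u1; rewrite //= /u1 (linZ A_lin) unit_scale.
have y1_le1 : hnorm y1 <= 1 by rewrite unit_scale.
have := le_trans (ler_norm _) (M_bound _ Gu1 y1 y1_le1).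
rewrite (linZ T_bop.1) (linZ A_lin) Re_ip_real_scale.
set b := Re _ => b_le.
have -> : b = hnorm y * hnorm (A u) * ((hnorm y)^-1 * (hnorm (A u))^-1 * b).
  by field; rewrite y_neq0 Au_neq0.
by rewrite -[leRHS]mulrA [leRHS]mulrC ler_wpM2l ?mulr_ge0 ?hnorm_ge0.
Qed.

Lemma sharp_hnorm_bounded : exists M, 0 <= M /\ forall y, hnorm (X y) <= M * hnorm y.
Proof.
have [M [M0 M_bound]] := sharp_weak_bound; exists M; split => // y.
case: X_sharp => _ [_ [_ X_cl]].
apply: hnorm_le_of_closure_range => [||u]; rewrite ?mulr_ge0 ?hnorm_ge0 //.
by rewrite (Re_formC ipC) M_bound.
Qed.

Lemma anorm_bounded_of_sharp : exists k, forall x, anorm (T x) <= k * anorm x.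
Proof.
have [M [M0 M_bound]] := sharp_hnorm_bounded.
case: T_bop => _ [MT MT_bound].
have k0 : 0 <= M * `|MT| by rewrite mulr_ge0.
have XT_bound x : hnorm (X (T x)) <= M * `|MT| * hnorm x.
  apply: le_trans (M_bound _) _; rewrite -mulrA ler_wpM2l //.
  by apply: le_trans (MT_bound x) _; rewrite ler_wpM2r ?hnorm_ge0 ?ler_norm.
have XT_sym x y : ip (A (X (T x))) y = ip x (A (X (T y))).
  by rewrite ipA_sharp_comp [RHS]ipC ipA_sharp_comp -ipA_C.
exists (Num.sqrt (M * `|MT|)) => x.
have := Re_ipA_le_of_symmetric k0 XT_sym XT_bound x.
rewrite ipA_sharp_comp -anorm_sqr => sqr_le.
apply: ler_of_sqr_le; first by rewrite mulr_ge0 ?sqrtr_ge0 ?anorm_ge0.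
by rewrite exprMn (sqr_sqrtr k0).
Qed.

Lemma anorm_sharp_le_of c : 0 <= c -> (forall x, anorm (T x) <= c * anorm x) ->
  forall y, anorm (X y) <= c * anorm y.
Proof.
move=> c0 T_le y.
have : anorm (X y) ^+ 2 <= c * anorm (X y) * anorm y.
  rewrite anorm_sqr -(Re_formC ipA_C) -sharp_cross.
  by apply: le_trans (Re_ipA_le _ _) _; rewrite ler_wpM2r ?anorm_ge0.
have [->|Xy_neq0] := eqVneq (anorm (X y)) 0; first by rewrite mulr_ge0 ?anorm_ge0.
by rewrite expr2 [c * _]mulrC -mulrA ler_pM2l // lt_def Xy_neq0 anorm_ge0.
Qed.
End Sharp.

Lemma anorm_diag2_sqr x :
  Defs.anorm (ip2 ip) (diag2 A) x ^+ 2 = anorm x.1 ^+ 2 + anorm x.2 ^+ 2.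
Proof.
rewrite !anorm_sqr /Defs.anorm sqr_sqrtr /= raddfD //.
by rewrite addr_ge0 // (Re_form_diag_ge0 (form := ipA) ipA_ge0).
Qed.

Lemma anorm_diag2_eq1 x1 x2 : Defs.anorm (ip2 ip) (diag2 A) (x1, x2) = 1 ->
  anorm x1 ^+ 2 + anorm x2 ^+ 2 = 1.
Proof. by move=> x_unit; rewrite -[RHS](expr1n _ 2) -x_unit anorm_diag2_sqr. Qed.

Section OperatorSeminorm.
Hypothesis A_neq0 : exists x, A x != 0.
Local Notation nA := (opnormA ip A).

Lemma exists_anorm_eq1 : exists x, anorm x = 1.
Proof.
case: A_neq0 => x Ax_neq0.
have x_gt0 : 0 < anorm x.
  rewrite lt_def anorm_ge0 andbT; apply: contra Ax_neq0 => /eqP x0.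
  have := Re_ipA_le x (A x); rewrite x0 mul0r -hnorm_sqr => Ax_le0.
  by apply/eqP/hnorm_eq0/eqP; rewrite -sqrf_eq0 eq_le Ax_le0 sqr_ge0.
exists ((anorm x)^-1%:C%C *: x).
by rewrite anormZ Re_normc_real ger0_norm ?invr_ge0 ?anorm_ge0 // mulVf // gt_eqF.
Qed.

Lemma exists_anorm_diag2_eq1 : exists x, Defs.anorm (ip2 ip) (diag2 A) x = 1.
Proof.
have [x0 x0_unit] := exists_anorm_eq1; exists (x0, 0).
apply/eqP; rewrite -sqrp_eq1 ?sqrtr_ge0 // anorm_diag2_sqr /= x0_unit.
by rewrite /Defs.anorm (lin0 A_lin) (form0l ipDZl) sqrtr0 expr0n addr0 expr1n.
Qed.

Lemma anorm_le_opnormA T : scalable T ->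
  (exists M, forall x, anorm (T x) <= M * anorm x) ->
  forall x, anorm (T x) <= nA T * anorm x.
Proof.
move=> T_scal [M M_bound] x; have [x0 x0_unit] := exists_anorm_eq1.
have sup_T : has_sup [set r | exists x, anorm x = 1 /\ r = anorm (T x)]%classic.
  split; first by exists (anorm (T x0)), x0.
  by exists M => _ [y [y_unit ->]]; have := M_bound y; rewrite y_unit mulr1.
have [x_eq0|x_neq0] := eqVneq (anorm x) 0.
  by have := M_bound x; rewrite x_eq0 !mulr0.
have x_gt0 : 0 < anorm x by rewrite lt_def x_neq0 anorm_ge0.
have x_scaled : anorm ((anorm x)^-1%:C%C *: x) = 1.
  by rewrite anormZ Re_normc_real ger0_norm ?invr_ge0 ?anorm_ge0 // mulVf.
have := sup_upper_bound sup_T (ex_intro _ _ (conj x_scaled erefl)).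
rewrite T_scal anormZ Re_normc_real ger0_norm ?invr_ge0 ?anorm_ge0 //.
by rewrite -ler_pdivlMl ?invr_gt0 // invrK mulrC.
Qed.

Lemma opnormA_ge0 T : scalable T ->
  (exists M, forall x, anorm (T x) <= M * anorm x) -> 0 <= nA T.
Proof.
move=> T_scal T_bounded; have [x0 x0_unit] := exists_anorm_eq1.
have := anorm_le_opnormA T_scal T_bounded x0; rewrite x0_unit mulr1.
exact: le_trans (anorm_ge0 _).
Qed.

Lemma anorm_op_le T X : is_bop ip T -> is_sharp ip A T X ->
  forall x, anorm (T x) <= nA T * anorm x.
Proof.
move=> T_bop X_sharp.
exact: anorm_le_opnormA (linZ T_bop.1) (anorm_bounded_of_sharp T_bop X_sharp).
Qed.

Lemma opnormA_op_ge0 T X : is_bop ip T -> is_sharp ip A T X -> 0 <= nA T.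
Proof.
move=> T_bop X_sharp.
exact: opnormA_ge0 (linZ T_bop.1) (anorm_bounded_of_sharp T_bop X_sharp).
Qed.

Lemma anorm_sharp_le T X : is_bop ip T -> is_sharp ip A T X ->
  forall y, anorm (X y) <= nA T * anorm y.
Proof.
move=> T_bop X_sharp.
apply: (anorm_sharp_le_of X_sharp); first exact: opnormA_op_ge0 T_bop X_sharp.
exact: anorm_op_le T_bop X_sharp.
Qed.

Lemma anorm_comp_le T U a b : scalable T -> scalable U -> 0 <= a ->
  (forall x, anorm (T x) <= a * anorm x) -> (forall x, anorm (U x) <= b * anorm x) ->
  forall x, anorm (T (U x)) <= nA (T \o U) * anorm x.
Proof.
move=> T_scal U_scal a0 T_le U_le.
apply: (anorm_le_opnormA (T := T \o U)); first by move=> c x /=; rewrite U_scal T_scal.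
exists (a * b) => x /=; apply: le_trans (T_le _) _.
by rewrite -mulrA ler_wpM2l.
Qed.

Lemma anormD_le_bnd y1 y2 x1 x2 a b c : 0 <= a -> 0 <= b ->
  anorm y1 <= a * anorm x1 -> anorm y2 <= b * anorm x2 ->
  Re (ip (A y1) y2) <= c * anorm x1 * anorm x2 ->
  anorm x1 ^+ 2 + anorm x2 ^+ 2 = 1 -> anorm (y1 + y2) <= bnd a b c.
Proof.
move=> a0 b0 y1_le y2_le cross_le x_unit.
apply: le_bnd (anorm_ge0 _) (anorm_ge0 _) x_unit _; rewrite anormD_sqr.
have sqr_le y x d : 0 <= d -> anorm y <= d * anorm x ->
    anorm y ^+ 2 <= d ^+ 2 * anorm x ^+ 2.
  by move=> d0 y_le; rewrite -exprMn ler_sqr ?nnegrE ?mulr_ge0 ?anorm_ge0.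
have := sqr_le _ _ _ a0 y1_le; have := sqr_le _ _ _ b0 y2_le; lra.
Qed.

Lemma anorm_row_le T U Tsh Ush x1 x2 : is_bop ip T -> is_bop ip U ->
  is_sharp ip A T Tsh -> is_sharp ip A U Ush -> anorm x1 ^+ 2 + anorm x2 ^+ 2 = 1 ->
  anorm (T x1 + U x2) <= bnd (nA T) (nA U) (nA (Tsh \o U)).
Proof.
move=> T_bop U_bop T_sharp U_sharp x_unit.
apply: anormD_le_bnd x_unit; [exact: opnormA_op_ge0 T_bop T_sharp
  | exact: opnormA_op_ge0 U_bop U_sharp | exact: (anorm_op_le T_bop T_sharp x1)
  | exact: (anorm_op_le U_bop U_sharp x2) |].
rewrite (sharp_cross T_sharp); apply: le_trans (Re_ipA_le _ _) _.
rewrite mulrAC [leRHS]mulrC ler_wpM2l ?anorm_ge0 //.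
exact: (anorm_comp_le (sharp_scalable T_sharp) (linZ U_bop.1)
  (opnormA_op_ge0 T_bop T_sharp) (anorm_sharp_le T_bop T_sharp)
  (anorm_op_le U_bop U_sharp) x2).
Qed.

Lemma anorm_sharp_row_le T U Tsh Ush x1 x2 : is_bop ip T -> is_bop ip U ->
  is_sharp ip A T Tsh -> is_sharp ip A U Ush -> anorm x1 ^+ 2 + anorm x2 ^+ 2 = 1 ->
  anorm (Tsh x1 + Ush x2) <= bnd (nA T) (nA U) (nA (T \o Ush)).
Proof.
move=> T_bop U_bop T_sharp U_sharp x_unit.
apply: anormD_le_bnd x_unit; [exact: opnormA_op_ge0 T_bop T_sharp
  | exact: opnormA_op_ge0 U_bop U_sharp | exact: (anorm_sharp_le T_bop T_sharp x1)
  | exact: (anorm_sharp_le U_bop U_sharp x2) |].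
rewrite ipA_C -(sharp_cross T_sharp) ReJ; apply: le_trans (Re_ipA_le _ _) _.
rewrite mulrAC ler_wpM2r ?anorm_ge0 //.
exact: (anorm_comp_le (linZ T_bop.1) (sharp_scalable U_sharp)
  (opnormA_op_ge0 T_bop T_sharp) (anorm_op_le T_bop T_sharp)
  (anorm_sharp_le U_bop U_sharp) x2).
Qed.
End OperatorSeminorm.

Lemma normc_ipA_add_le x1 x2 y1 y2 : anorm x1 ^+ 2 + anorm x2 ^+ 2 = 1 ->
  Re `|ip (A y1) x1 + ip (A y2) x2| <= anorm y1 + anorm y2.
Proof.
move=> x_unit; have le1 x : anorm x ^+ 2 <= 1 -> anorm x <= 1.
  by move=> x_le; apply: ler_of_sqr_le; rewrite ?ler01 ?expr1n.
have x1_le1 : anorm x1 <= 1 by apply: le1; rewrite -x_unit lerDl sqr_ge0.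
have x2_le1 : anorm x2 <= 1 by apply: le1; rewrite -x_unit lerDr sqr_ge0.
apply: le_trans (Re_normcD _ _) (lerD _ _); apply: le_trans (normc_ipA_le _ _) _;
  exact: ler_piMr (anorm_ge0 _) _.
Qed.

Lemma opmx2_ipA_sharpE P Q R' S Psh Qsh Rsh Ssh :
  is_sharp ip A P Psh -> is_sharp ip A Q Qsh ->
  is_sharp ip A R' Rsh -> is_sharp ip A S Ssh -> forall x1 x2,
  ip (A (P x1 + Q x2)) x1 + ip (A (R' x1 + S x2)) x2 =
  (ip (A (Psh x1 + Rsh x2)) x1 + ip (A (Qsh x1 + Ssh x2)) x2)^*%C.
Proof.
move=> P_sharp Q_sharp R_sharp S_sharp x1 x2.
rewrite !(linD A_lin) !(formDl ipDZl) (sharp_cross_conj P_sharp).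
rewrite (sharp_cross_conj Q_sharp) (sharp_cross_conj R_sharp) (sharp_cross_conj S_sharp).
by rewrite !rmorphD addrACA.
Qed.
End PositiveOperator.
End Hilbert.

Lemma numradA_le (R : realType) (W : Type) (ip : W -> W -> R[i]) (A T : W -> W) (c : R) :
  (exists x, anorm ip A x = 1) ->
  (forall x, anorm ip A x = 1 -> Re `|ip (A (T x)) x| <= c) -> numradA ip A T <= c.
Proof.
move=> [x0 x0_unit] le_c; apply: ge_sup => [|_ [x [x_unit ->]]]; last exact: le_c.
by exists (Re `|ip (A (T x0)) x0|), x0.
Qed.

Theorem theorem2p16 (R : realType) (V : lmodType R[i]) (ip : V -> V -> R[i])
  (A P Q R' S Psh Qsh Rsh Ssh : V -> V) :
  is_hilbert ip -> is_positive ip A -> (exists x, A x != 0) ->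
  in_BA ip A P -> in_BA ip A Q -> in_BA ip A R' -> in_BA ip A S ->
  is_sharp ip A P Psh -> is_sharp ip A Q Qsh ->
  is_sharp ip A R' Rsh -> is_sharp ip A S Ssh ->
  let nA := opnormA ip A in
  let mu := bnd (nA P) (nA Q) (nA (Psh \o Q)) + bnd (nA R') (nA S) (nA (Ssh \o R')) in
  let nu := bnd (nA P) (nA R') (nA (P \o Rsh)) + bnd (nA Q) (nA S) (nA (S \o Qsh)) in
  numradA (ip2 ip) (diag2 A) (opmx2 P Q R' S) <= Num.min mu nu.
Proof.
move=> hH hA A_neq0 [P_bop _] [Q_bop _] [R_bop _] [S_bop _] P_sharp Q_sharp R_sharp S_sharp.
cbv zeta.
apply: numradA_le => [|[x1 x2] /(anorm_diag2_eq1 hA) x_unit].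
  exact: exists_anorm_diag2_eq1.
have x_unit_swap := etrans (addrC _ _) x_unit.
rewrite le_min; apply/andP; split.
  apply: le_trans (normc_ipA_add_le hH hA _ _ x_unit) (lerD _ _).
    exact: (anorm_row_le hH hA A_neq0 P_bop Q_bop P_sharp Q_sharp x_unit).
  rewrite /= addrC bndC.
  exact: (anorm_row_le hH hA A_neq0 S_bop R_bop S_sharp R_sharp x_unit_swap).
rewrite -[ip2 ip _ _]/(ip (A (P x1 + Q x2)) x1 + ip (A (R' x1 + S x2)) x2).
rewrite (opmx2_ipA_sharpE hH hA P_sharp Q_sharp R_sharp S_sharp) Re_normcJ.
apply: le_trans (normc_ipA_add_le hH hA _ _ x_unit) (lerD _ _).
  exact: (anorm_sharp_row_le hH hA A_neq0 P_bop R_bop P_sharp R_sharp x_unit).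
rewrite addrC bndC.
exact: (anorm_sharp_row_le hH hA A_neq0 S_bop Q_bop S_sharp Q_sharp x_unit_swap).
Qed.
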